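(* Let $D$ be a dialgebra and $E$ a dendriform algebra over $K$. Then on $D\otimes E$ the bracket defined on generators by $$[x\otimes a,y\otimes b]:=(x\dashv y)\otimes(a\prec b)-(y\vdash x)\otimes(b\succ a)-(y\dashv x)\otimes(b\prec a)+(x\vdash y)\otimes(a\succ b)$$ ($x,y\in D$, $a,b\in E$), extended bilinearly, is a Lie bracket.
   Context: A dialgebra is a vector space $D$ with bilinear $\dashv,\vdash$ satisfying $(x\dashv y)\dashv z=x\dashv(y\vdash z)$, $(x\dashv y)\dashv z=x\dashv(y\dashv z)$, $(x\vdash y)\dashv z=x\vdash(y\dashv z)$, $(x\dashv y)\vdash z=x\vdash(y\vdash z)$, $(x\vdash y)\vdash z=x\vdash(y\vdash z)$. A dendriform algebra is a vector space $E$ with bilinear $\prec,\succ$ satisfying (i) $(a\prec b)\prec c=a\prec(b\prec c)+a\prec(b\succ c)$, (ii) $(a\succ b)\prec c=a\succ(b\prec c)$, (iii) $(a\prec b)\succ c+(a\succ b)\succ c=a\succ(b\succ c)$. *)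

From mathcomp Require Import all_boot all_algebra.
Set Implicit Arguments. Unset Strict Implicit. Unset Printing Implicit Defensive.
Import GRing.Theory.
Local Open Scope ring_scope.

Definition linfun (K : fieldType) (U V : lmodType K) (g : U -> V) : Prop :=
  forall (c : K) (u v : U), g (c *: u + v) = c *: g u + g v.

Definition bilin (K : fieldType) (U V W : lmodType K) (f : U -> V -> W) : Prop :=
  (forall v : V, linfun (fun u => f u v)) /\ (forall u : U, linfun (f u)).

(* Dialgebra: bilinear dashv (dl) and vdash (dr) with the five axioms *)
Definition is_dialgebra (K : fieldType) (D : lmodType K) (dl dr : D -> D -> D) : Prop :=
  [/\ bilin dl, bilin dr &
   forall x y z : D,
   [/\ dl (dl x y) z = dl x (dr y z),
       dl (dl x y) z = dl x (dl y z),
       dl (dr x y) z = dr x (dl y z),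
       dr (dl x y) z = dr x (dr y z) &
       dr (dr x y) z = dr x (dr y z)]].

(* Dendriform algebra: bilinear prec (pl) and succ (pr) with axioms (i)-(iii) *)
Definition is_dendriform (K : fieldType) (E : lmodType K) (pl pr : E -> E -> E) : Prop :=
  [/\ bilin pl, bilin pr &
   forall a b c : E,
   [/\ pl (pl a b) c = pl a (pl b c) + pl a (pr b c),
       pl (pr a b) c = pr a (pl b c) &
       pr (pl a b) c + pr (pr a b) c = pr a (pr b c)]].

(* (T, t) is a tensor product of D and E over K: t is bilinear, T is spanned
   by the pure tensors, and every bilinear map out of D x E factors linearly
   through t (universal property; uniqueness follows from spanning). *)
Definition is_tensor_product (K : fieldType) (D E T : lmodType K)
    (t : D -> E -> T) : Prop :=
  [/\ bilin t,
      (forall z : T, exists s : seq (D * E), z = \sum_(p <- s) t p.1 p.2) &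
      (forall (W : lmodType K) (f : D -> E -> W), bilin f ->
         exists g : T -> W, linfun g /\ forall x a, g (t x a) = f x a)].

Definition is_lie_bracket (K : fieldType) (L : lmodType K) (br : L -> L -> L) : Prop :=
  [/\ bilin br,
      (forall z : L, br z z = 0) &
      (forall u v w : L, br u (br v w) + br v (br w u) + br w (br u v) = 0)].

From Pilot Require Import Defs.
From mathcomp Require Import all_boot all_algebra.
Set Implicit Arguments. Unset Strict Implicit. Unset Printing Implicit Defensive.
Import GRing.Theory.
Local Open Scope ring_scope.

(* The product (x (x) a)(y (x) b) = (x -| y) (x) (a < b) + (x |- y) (x) (a > b)
   is associative on pure tensors: expanding both sides, the five dialgebra
   axioms and the three dendriform axioms match the terms one by one.  The
   given bracket is the commutator of this product on pure tensors, so the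
   Jacobi identity holds on pure tensors; since pure tensors span D (x) E and
   the bracket is bilinear, it holds everywhere, and likewise for the
   alternating law. *)

Section LinearMaps.
Variables (K : fieldType) (U V : lmodType K) (g : U -> V).
Hypothesis g_lin : Defs.linfun g.

Lemma linfunD u v : g (u + v) = g u + g v.
Proof. by have := g_lin 1 u v; rewrite !scale1r. Qed.

Lemma linfun0 : g 0 = 0.
Proof. by have := g_lin (-1) 0 0; rewrite scaler0 addr0 scaleN1r addNr. Qed.

Lemma linfunN u : g (- u) = - g u.
Proof. by have := g_lin (-1) u 0; rewrite addr0 linfun0 addr0 !scaleN1r. Qed.

Lemma linfunB u v : g (u - v) = g u - g v.
Proof. by rewrite linfunD linfunN. Qed.

End LinearMaps.

Section SpanInduction.
Variables (V : zmodType) (G : Type) (gen : G -> V).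
Hypothesis gen_span : forall v : V, exists s : seq G, v = \sum_(p <- s) gen p.

Lemma span_ind (P : V -> Prop) :
  P 0 -> (forall u v, P u -> P v -> P (u + v)) -> (forall p, P (gen p)) ->
  forall v, P v.
Proof.
move=> P0 PD Pgen v; have [s ->] := gen_span v.
elim: s => [|p s IH]; first by rewrite big_nil.
by rewrite big_cons; apply: PD.
Qed.

End SpanInduction.

Section BracketOnGenerators.
Variables (K : fieldType) (L : lmodType K) (br : L -> L -> L).
Variables (G : Type) (gen : G -> L).
Hypothesis br_bilin : bilin br.
Hypothesis gen_span : forall v : L, exists s : seq G, v = \sum_(p <- s) gen p.

Let brDl u1 u2 v : br (u1 + u2) v = br u1 v + br u2 v.
Proof. exact: linfunD (br_bilin.1 v) u1 u2. Qed.
Let brDr u v1 v2 : br u (v1 + v2) = br u v1 + br u v2.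
Proof. exact: linfunD (br_bilin.2 u) v1 v2. Qed.
Let br0l v : br 0 v = 0.
Proof. exact: linfun0 (br_bilin.1 v). Qed.
Let br0r u : br u 0 = 0.
Proof. exact: linfun0 (br_bilin.2 u). Qed.

Definition jacobiator u v w := br u (br v w) + br v (br w u) + br w (br u v).

Lemma jacobiatorC u v w : jacobiator u v w = jacobiator v w u.
Proof. by rewrite /jacobiator (ACl (2*3*1)%AC). Qed.

Lemma jacobiatorDl u1 u2 v w :
  jacobiator (u1 + u2) v w = jacobiator u1 v w + jacobiator u2 v w.
Proof. by rewrite /jacobiator !(brDl, brDr) !addrA (ACl (1*3*5*2*4*6)%AC). Qed.

Lemma jacobiator0l v w : jacobiator 0 v w = 0.
Proof. by rewrite /jacobiator !(br0l, br0r) !addr0. Qed.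

Lemma jacobiator_span_eq0 :
  (forall p q r, jacobiator (gen p) (gen q) (gen r) = 0) ->
  forall u v w, jacobiator u v w = 0.
Proof.
have ind_first v w : (forall p, jacobiator (gen p) v w = 0) ->
    forall u, jacobiator u v w = 0.
  move=> Jgen; apply: (span_ind gen_span) => // [|u1 u2 J1 J2].
    exact: jacobiator0l.
  by rewrite jacobiatorDl J1 J2 addr0.
move=> Jgen u v w; apply: (ind_first) => r; rewrite jacobiatorC.
apply: (ind_first) => q; rewrite jacobiatorC.
by apply: (ind_first) => p; rewrite jacobiatorC.
Qed.

Lemma bracket_span_alternating :
  (forall p q, br (gen p) (gen q) + br (gen q) (gen p) = 0) ->
  (forall p, br (gen p) (gen p) = 0) ->
  forall u, br u u = 0.
Proof.
move=> anti_gen diag.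
have anti u v : br u v + br v u = 0.
  have anti_l v' : (forall p, br (gen p) v' + br v' (gen p) = 0) ->
      forall u', br u' v' + br v' u' = 0.
    move=> A; elim/(span_ind gen_span) => [|u1 u2 A1 A2|p]; last exact: A.
      by rewrite br0r br0l addr0.
    by rewrite brDl brDr addrACA A1 A2 addr0.
  apply: (anti_l) => p; rewrite addrC; apply: (anti_l) => q.
  by rewrite addrC anti_gen.
elim/(span_ind gen_span) => [|u1 u2 A1 A2|p]; [exact: br0l | | exact: diag].
by rewrite brDl !brDr A1 A2 add0r addr0 anti.
Qed.

Lemma is_lie_bracket_span :
  (forall p q, br (gen p) (gen q) + br (gen q) (gen p) = 0) ->
  (forall p, br (gen p) (gen p) = 0) ->
  (forall p q r, jacobiator (gen p) (gen q) (gen r) = 0) ->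
  is_lie_bracket br.
Proof.
move=> anti diag Jgen; split => //.
  exact: bracket_span_alternating.
exact: jacobiator_span_eq0.
Qed.

End BracketOnGenerators.

Section DialgebraTensorDendriform.
Variables (K : fieldType) (D E T : lmodType K).
Variables (dl dr : D -> D -> D) (pl pr : E -> E -> E) (t : D -> E -> T).
Hypotheses (D_dialg : is_dialgebra dl dr) (E_dend : is_dendriform pl pr).
Hypothesis t_bilin : bilin t.

Definition tensor_mul x a y b := t (dl x y) (pl a b) + t (dr x y) (pr a b).

Definition tensor_mul3 x a y b z c :=
  tensor_mul (dl x y) (pl a b) z c + tensor_mul (dr x y) (pr a b) z c.

Lemma tensor_mul_assoc x a y b z c :
  tensor_mul x a (dl y z) (pl b c) + tensor_mul x a (dr y z) (pr b c) =
  tensor_mul3 x a y b z c.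
Proof.
have [_ _ /(_ x y z) [d1 d2 d3 d4 d5]] := D_dialg.
have [_ _ /(_ a b c) [e1 e2 e3]] := E_dend.
have tDr x' : {morph t x' : u v / u + v} := linfunD (t_bilin.2 x').
rewrite /tensor_mul3 /tensor_mul -d1 d2 d3 d4 d5 e1 e2 -e3 !tDr !addrA.
by rewrite (ACl (1*3*4*2*5)%AC).
Qed.

Variable br : T -> T -> T.
Hypothesis br_bilin : bilin br.
Hypothesis br_pure : forall x y a b,
  br (t x a) (t y b) = tensor_mul x a y b - tensor_mul y b x a.

Lemma jacobiator_pure x y z a b c :
  jacobiator br (t x a) (t y b) (t z c) = 0.
Proof.
have brDr u : {morph br u : v w / v + w} := linfunD (br_bilin.2 u).
have brBr u v w : br u (v - w) = br u v - br u w := linfunB (br_bilin.2 u) v w.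
have br_mul x' a' y' b' z' c' : br (t x' a') (tensor_mul y' b' z' c') =
    tensor_mul3 x' a' y' b' z' c' - tensor_mul3 y' b' z' c' x' a'.
  by rewrite {1}/tensor_mul brDr !br_pure addrACA -opprD tensor_mul_assoc.
rewrite /jacobiator !br_pure !brBr !br_mul.
(* Generalizing [tensor_mul3] stops the rewrites below from unfolding it; the
   permutation then puts each of the twelve terms next to its opposite. *)
move: (tensor_mul3) => m3.
rewrite !opprB !addrA (ACl ((1*10)*(2*5)*(3*12)*(4*7)*(6*9)*(8*11))%AC) /=.
by rewrite !subrr !addNr !addr0.
Qed.

End DialgebraTensorDendriform.

Theorem proposition5p3 (K : fieldType) (D E T : lmodType K)
    (dl dr : D -> D -> D) (pl pr : E -> E -> E) (t : D -> E -> T)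
    (br : T -> T -> T) :
  is_dialgebra dl dr -> is_dendriform pl pr -> is_tensor_product t ->
  bilin br ->
  (forall (x y : D) (a b : E),
      br (t x a) (t y b) =
        t (dl x y) (pl a b) - t (dr y x) (pr b a)
        - t (dl y x) (pl b a) + t (dr x y) (pr a b)) ->
  is_lie_bracket br.
Proof.
move=> D_dialg E_dend [t_bilin t_span _] br_bilin br_def.
pose mul := tensor_mul dl dr pl pr t.
have br_pure x y a b : br (t x a) (t y b) = mul x a y b - mul y b x a.
  by rewrite br_def /mul /tensor_mul opprD !addrA (ACl (1*4*3*2)%AC).
apply: (is_lie_bracket_span (gen := fun p => t p.1 p.2)) => //.
- by move=> [x a] [y b]; rewrite !br_pure -[X in _ + X]opprB subrr.
- by move=> [x a]; rewrite br_pure subrr.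
- by move=> [x a] [y b] [z c]; apply: (jacobiator_pure D_dialg E_dend t_bilin br_bilin).
Qed.
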